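(* Let $d,N\ge1$, $\epsilon\in(0,1]$, $\delta\ge0$ with $C_d\delta<1$, and $\beta\in(0,1/2]$ with $N\ge\ln(2d/\beta)$. Let $x(1),\dots,x(N)\in[-1,1]^d$ and let $x^*(i)=\mathcal{M}(x(i))$ be obtained by applying Mechanism-1 (with parameters $\epsilon,\delta$) independently to each $x(i)$. For $j\in\{1,\dots,d\}$ put $Z_j=\frac1N\sum_{i=1}^N x^*_j(i)$ and $X_j=\frac1N\sum_{i=1}^N x_j(i)$. Then with probability at least $1-\beta$, $$\max_{j\in\{1,\dots,d\}}|Z_j-X_j|=O\!\left(\frac{\sqrt{d\log(d/\beta)}}{(\epsilon+2^d\delta)\sqrt N}\right),$$ where the implied constant is absolute (independent of $d,N,\epsilon,\delta,\beta$ and the data).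
   Context: Let $C_d=2^{d-1}$ if $d$ is odd and $C_d=2^{d-1}-\frac12\binom{d}{d/2}$ if $d$ is even. For $B>0$ and $v\in\{-1,1\}^d$ let $T^+(v)=\{y\in\{-B,B\}^d: y\cdot v>0\}$, $T^-(v)=\{y\in\{-B,B\}^d: y\cdot v\le 0\}$. For $\alpha\in[0,1]$, $\mathcal{M}_{\alpha,B}$ takes $x\in[-1,1]^d$, samples $V\in\{-1,1\}^d$ with independent coordinates $\mathbb{P}[V_j=\pm1]=\frac12\pm\frac12x_j$, independently samples $u\in\{0,1\}$ with $\mathbb{P}[u=1]=\alpha$, and outputs a uniformly random element of $T^+(V)$ if $u=1$ and of $T^-(V)$ if $u=0$. Mechanism-1 with parameters $\epsilon>0,\delta\ge0$ is $\mathcal{M}=\mathcal{M}_{\alpha_{\epsilon,\delta},B_{\epsilon,\delta}}$ where $\alpha_{\epsilon,\delta}=\frac{e^\epsilon+C_d\delta}{e^\epsilon+1}$ if $d$ is odd and $\alpha_{\epsilon,\delta}=\frac{e^\epsilon C_d+\delta C_d(2^d-C_d)}{(e^\epsilon-1)C_d+2^d}$ if $d$ is even, and $B_{\epsilon,\delta}=\frac{2^d+C_d(e^\epsilon-1)}{\binom{d-1}{(d-1)/2}(e^\epsilon+2^d\delta-1)}$ if $d$ is odd, $B_{\epsilon,\delta}=\frac{2^d+C_d(e^\epsilon-1)}{\binom{d-1}{d/2}(e^\epsilon+2^d\delta-1)}$ if $d$ is even. *)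

From Stdlib Require Import Reals Lra List ClassicalEpsilon.
Import ListNotations.
Open Scope R_scope.

Definition rsum {A} (f : A -> R) (l : list A) : R := fold_right Rplus 0 (map f l).
Definition rprod {A} (f : A -> R) (l : list A) : R := fold_right Rmult 1 (map f l).

(* Sign vectors in {-1,1}^d, encoded as lists of booleans of length d
   (true = +1, false = -1). *)
Fixpoint all_signs (d : nat) : list (list bool) :=
  match d with
  | O => [[]]
  | S k => map (cons true) (all_signs k) ++ map (cons false) (all_signs k)
  end.

Definition sgn (b : bool) : R := if b then 1 else -1.

Definition coord (s : list bool) (j : nat) : R := sgn (nth j s false).

Definition Cd (d : nat) : R :=
  if Nat.even d then 2 ^ (d - 1) - / 2 * Binomial.C d (d / 2)
  else 2 ^ (d - 1).

Definition alpha_ed (d : nat) (eps delta : R) : R :=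
  if Nat.even d then
    (exp eps * Cd d + delta * Cd d * (2 ^ d - Cd d)) / ((exp eps - 1) * Cd d + 2 ^ d)
  else (exp eps + Cd d * delta) / (exp eps + 1).

Definition B_ed (d : nat) (eps delta : R) : R :=
  if Nat.even d then
    (2 ^ d + Cd d * (exp eps - 1)) /
      (Binomial.C (d - 1) (d / 2) * (exp eps + 2 ^ d * delta - 1))
  else
    (2 ^ d + Cd d * (exp eps - 1)) /
      (Binomial.C (d - 1) ((d - 1) / 2) * (exp eps + 2 ^ d * delta - 1)).

Definition dotBy (d : nat) (B : R) (s w : list bool) : R :=
  rsum (fun j => (B * coord s j) * coord w j) (seq 0 d).

Definition card_Tplus (d : nat) (B : R) (w : list bool) : R :=
  INR (length (filter (fun s => if Rlt_dec 0 (dotBy d B s w) then true else false)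
                      (all_signs d))).
Definition card_Tminus (d : nat) (B : R) (w : list bool) : R :=
  INR (length (filter (fun s => if Rlt_dec 0 (dotBy d B s w) then false else true)
                      (all_signs d))).

Definition prob_V (d : nat) (x : nat -> R) (w : list bool) : R :=
  rprod (fun j => / 2 + / 2 * x j * coord w j) (seq 0 d).

(* Probability that M_{alpha,B}(x) outputs the point B * s of {-B,B}^d. *)
Definition mech_pmf (d : nat) (alpha B : R) (x : nat -> R) (s : list bool) : R :=
  rsum (fun w => prob_V d x w *
          (if Rlt_dec 0 (dotBy d B s w)
           then alpha / card_Tplus d B w
           else (1 - alpha) / card_Tminus d B w))
       (all_signs d).

Fixpoint all_outcomes (d n : nat) : list (list (list bool)) :=
  match n with
  | O => [[]]
  | S k => concat (map (fun s => map (cons s) (all_outcomes d k)) (all_signs d))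
  end.

(* Joint pmf: mechanism applied independently to x(0), ..., x(N-1);
   x i j is the j-th coordinate of the i-th data point. *)
Definition joint_pmf (d N : nat) (alpha B : R) (x : nat -> nat -> R)
    (ys : list (list bool)) : R :=
  rprod (fun i => mech_pmf d alpha B (x i) (nth i ys [])) (seq 0 N).

Definition indic (P : Prop) : R :=
  if excluded_middle_informative P then 1 else 0.

Definition prob_mech1 (d N : nat) (eps delta : R) (x : nat -> nat -> R)
    (E : list (list bool) -> Prop) : R :=
  rsum (fun ys => joint_pmf d N (alpha_ed d eps delta) (B_ed d eps delta) x ys * indic (E ys))
       (all_outcomes d N).

Definition Zj (d N : nat) (eps delta : R) (ys : list (list bool)) (j : nat) : R :=
  / INR N * rsum (fun i => B_ed d eps delta * coord (nth i ys []) j) (seq 0 N).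

Definition Xj (N : nat) (x : nat -> nat -> R) (j : nat) : R :=
  / INR N * rsum (fun i => x i j) (seq 0 N).

(* max_{j in 1..d} |Z_j - X_j| (0-based indices; values are >= 0, d >= 1). *)
Definition maxdev (d N : nat) (eps delta : R) (x : nat -> nat -> R)
    (ys : list (list bool)) : R :=
  fold_right Rmax 0 (map (fun j => Rabs (Zj d N eps delta ys j - Xj N x j)) (seq 0 d)).

(* Mechanism-1 is unbiased: its output B*s has expected coordinate
   E[B s_j] = x_j.  Hence N (Z_j - X_j) is a sum of N independent mean-zero
   terms bounded by B + 1, and the Chernoff method with Hoeffding's lemma plus
   a union bound over the 2d one-sided tails gives the claim, because the
   scale B satisfies (B (eps + 2^d delta))^2 <= 72 d. *)

From Stdlib Require Import Reals Lra Lia List Arith ClassicalEpsilon.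
Import ListNotations.
Open Scope R_scope.

Lemma rsum_cons {A} (f : A -> R) a l : rsum f (a :: l) = f a + rsum f l.
Proof. reflexivity. Qed.

Lemma rsum_app {A} (f : A -> R) l1 l2 : rsum f (l1 ++ l2) = rsum f l1 + rsum f l2.
Proof. induction l1; simpl; [|rewrite !rsum_cons, IHl1]; unfold rsum; simpl; ring. Qed.

Lemma rsum_map {A B} (f : B -> R) (g : A -> B) l :
  rsum f (map g l) = rsum (fun a => f (g a)) l.
Proof. unfold rsum; rewrite map_map; reflexivity. Qed.

Lemma rsum_concat {A} (f : A -> R) (ls : list (list A)) :
  rsum f (concat ls) = rsum (rsum f) ls.
Proof. induction ls; [reflexivity|]. simpl. rewrite rsum_app, rsum_cons, IHls; reflexivity. Qed.

Lemma rsum_ext_in {A} (f g : A -> R) l :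
  (forall a, In a l -> f a = g a) -> rsum f l = rsum g l.
Proof.
  induction l; intros H; [reflexivity|].
  rewrite !rsum_cons, H, IHl; simpl; auto; intros; apply H; simpl; auto.
Qed.

Lemma rsum_ext {A} (f g : A -> R) l : (forall a, f a = g a) -> rsum f l = rsum g l.
Proof. intros; apply rsum_ext_in; auto. Qed.

Lemma rsum_plus {A} (f g : A -> R) l : rsum (fun a => f a + g a) l = rsum f l + rsum g l.
Proof. induction l; [unfold rsum; simpl; ring|]. rewrite !rsum_cons, IHl; ring. Qed.

Lemma rsum_minus {A} (f g : A -> R) l : rsum (fun a => f a - g a) l = rsum f l - rsum g l.
Proof. induction l; [unfold rsum; simpl; ring|]. rewrite !rsum_cons, IHl; ring. Qed.

Lemma rsum_scal {A} (c : R) (f : A -> R) l : rsum (fun a => c * f a) l = c * rsum f l.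
Proof. induction l; [unfold rsum; simpl; ring|]. rewrite !rsum_cons, IHl; ring. Qed.

Lemma rsum_scal_r {A} (c : R) (f : A -> R) l : rsum (fun a => f a * c) l = rsum f l * c.
Proof. induction l; [unfold rsum; simpl; ring|]. rewrite !rsum_cons, IHl; ring. Qed.

Lemma rsum_const {A} c (l : list A) : rsum (fun _ => c) l = c * INR (length l).
Proof. induction l; simpl length; [unfold rsum; simpl; ring|]. rewrite rsum_cons, IHl, S_INR; ring. Qed.

Lemma rsum_swap {A B} (F : A -> B -> R) l1 l2 :
  rsum (fun a => rsum (fun b => F a b) l2) l1 = rsum (fun b => rsum (fun a => F a b) l1) l2.
Proof.
  induction l1 as [|a l1 IH].
  - rewrite (rsum_ext (fun b => rsum (fun a => F a b) []) (fun _ => 0)) by reflexivity.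
    rewrite rsum_const. unfold rsum at 1; simpl; ring.
  - rewrite rsum_cons, IH, <- rsum_plus. apply rsum_ext; intros; rewrite rsum_cons; ring.
Qed.

Lemma rsum_le {A} (f g : A -> R) l :
  (forall a, In a l -> f a <= g a) -> rsum f l <= rsum g l.
Proof.
  induction l; intros H; [unfold rsum; simpl; lra|]. rewrite !rsum_cons.
  apply Rplus_le_compat; [apply H; left; auto | apply IHl; intros; apply H; right; auto].
Qed.

Lemma rsum_nonneg {A} (f : A -> R) l : (forall a, In a l -> 0 <= f a) -> 0 <= rsum f l.
Proof. intros H. replace 0 with (rsum (fun _ : A => 0) l) by (rewrite rsum_const; ring). apply rsum_le; auto. Qed.

Lemma rsum_ge_term {A} (f : A -> R) l a :
  In a l -> (forall b, In b l -> 0 <= f b) -> f a <= rsum f l.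
Proof.
  induction l; intros Hin H; [destruct Hin|]. rewrite rsum_cons.
  assert (0 <= f a0) by (apply H; left; auto).
  assert (0 <= rsum f l) by (apply rsum_nonneg; intros; apply H; right; auto).
  destruct Hin as [->|Hin]; [lra|].
  assert (f a <= rsum f l) by (apply IHl; auto; intros; apply H; right; auto). lra.
Qed.

Lemma rsum_length_filter {A} (p : A -> bool) l :
  INR (length (filter p l)) = rsum (fun a => if p a then 1 else 0) l.
Proof.
  induction l; [reflexivity|]. simpl. rewrite rsum_cons.
  destruct (p a); simpl length; [rewrite S_INR|]; rewrite IHl; ring.
Qed.

Lemma rsum_seq_succ (f : nat -> R) n :
  rsum f (seq 0 (S n)) = f 0%nat + rsum (fun j => f (S j)) (seq 0 n).
Proof. simpl seq. rewrite rsum_cons, <- seq_shift, rsum_map. reflexivity. Qed.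

Lemma rprod_cons {A} (f : A -> R) a l : rprod f (a :: l) = f a * rprod f l.
Proof. reflexivity. Qed.

Lemma rprod_ext_in {A} (f g : A -> R) l :
  (forall a, In a l -> f a = g a) -> rprod f l = rprod g l.
Proof.
  induction l; intros H; [reflexivity|].
  rewrite !rprod_cons, H, IHl; simpl; auto; intros; apply H; simpl; auto.
Qed.

Lemma rprod_mult {A} (f g : A -> R) l : rprod (fun a => f a * g a) l = rprod f l * rprod g l.
Proof. induction l; [unfold rprod; simpl; ring|]. rewrite !rprod_cons, IHl; ring. Qed.

Lemma rprod_const {A} c (l : list A) : rprod (fun _ => c) l = c ^ length l.
Proof. induction l; [reflexivity|]. rewrite rprod_cons, IHl; simpl; ring. Qed.

Lemma rprod_nonneg {A} (f : A -> R) l : (forall a, In a l -> 0 <= f a) -> 0 <= rprod f l.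
Proof.
  induction l; intros H; [unfold rprod; simpl; lra|]. rewrite rprod_cons.
  apply Rmult_le_pos; [apply H; left; auto | apply IHl; intros; apply H; right; auto].
Qed.

Lemma rprod_le {A} (f g : A -> R) l :
  (forall a, In a l -> 0 <= f a <= g a) -> rprod f l <= rprod g l.
Proof.
  induction l; intros H; [unfold rprod; simpl; lra|]. rewrite !rprod_cons.
  assert (0 <= rprod f l) by (apply rprod_nonneg; intros; apply H; right; auto).
  assert (rprod f l <= rprod g l) by (apply IHl; intros; apply H; right; auto).
  destruct (H a (or_introl eq_refl)). apply Rmult_le_compat; auto.
Qed.

Lemma rprod_seq_succ (f : nat -> R) n :
  rprod f (seq 0 (S n)) = f 0%nat * rprod (fun j => f (S j)) (seq 0 n).
Proof. simpl seq. rewrite rprod_cons, <- seq_shift. unfold rprod; rewrite map_map. reflexivity. Qed.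

Lemma exp_rsum {A} (f : A -> R) l : exp (rsum f l) = rprod (fun a => exp (f a)) l.
Proof.
  induction l; [unfold rsum, rprod; simpl; apply exp_0|].
  rewrite rsum_cons, rprod_cons, exp_plus, IHl; reflexivity.
Qed.

(** * Counting sign vectors by agreements *)

Lemma all_signs_length d s : In s (all_signs d) -> length s = d.
Proof.
  revert s; induction d; simpl; intros s H.
  - destruct H as [<-|[]]; reflexivity.
  - apply in_app_or in H; destruct H as [H|H]; apply in_map_iff in H;
      destruct H as [s' [<- H]]; simpl; f_equal; auto.
Qed.

Fixpoint agree (s w : list bool) : nat :=
  match s, w with
  | a :: s', b :: w' => ((if Bool.eqb a b then 1 else 0) + agree s' w')%nat
  | _, _ => 0%nat
  end.

Lemma coord_cons_0 a s : coord (a :: s) 0 = sgn a.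
Proof. reflexivity. Qed.

Lemma coord_cons_S a s j : coord (a :: s) (S j) = coord s j.
Proof. reflexivity. Qed.

Lemma coord_cases s j : coord s j = 1 \/ coord s j = -1.
Proof. unfold coord, sgn. destruct (nth j s false); auto. Qed.

Lemma dotBy_agree d B s w : length s = d -> length w = d ->
  dotBy d B s w = B * (2 * INR (agree s w) - INR d).
Proof.
  revert s w; induction d; intros s w Hs Hw.
  - destruct s, w; try discriminate. unfold dotBy, rsum; simpl; ring.
  - destruct s as [|a s], w as [|b w]; try discriminate.
    injection Hs as Hs; injection Hw as Hw.
    unfold dotBy. rewrite rsum_seq_succ, !coord_cons_0.
    change (rsum (fun j => B * coord (a :: s) (S j) * coord (b :: w) (S j)) (seq 0 d))
      with (dotBy d B s w).
    rewrite IHd by auto. simpl agree. rewrite plus_INR, S_INR.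
    destruct a, b; simpl; ring.
Qed.

Lemma Tplus_test_agree {T : Type} d B s w (X Y : T) : 0 < B -> length s = d -> length w = d ->
  (if Rlt_dec 0 (dotBy d B s w) then X else Y) =
  (if Nat.leb (S (d / 2)) (agree s w) then X else Y).
Proof.
  intros HB Hs Hw. rewrite dotBy_agree by auto.
  pose proof (Nat.div_mod d 2) as Hdm. pose proof (Nat.mod_upper_bound d 2) as Hmod.
  destruct (Rlt_dec _ _) as [H|H]; destruct (Nat.leb_spec (S (d / 2)) (agree s w)) as [H'|H']; auto.
  - exfalso. assert (Hpos : 0 < 2 * INR (agree s w) - INR d) by nra.
    assert (INR d < INR (2 * agree s w)) by (rewrite mult_INR; simpl; lra).
    apply INR_lt in H0. lia.
  - exfalso. apply H. apply Rmult_lt_0_compat; auto.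
    assert (Hlt : (d < 2 * agree s w)%nat) by lia.
    apply lt_INR in Hlt. rewrite mult_INR in Hlt. simpl in Hlt. lra.
Qed.

Definition ind (b : bool) : R := if b then 1 else 0.

(* tail_count d t = #{s in {-1,1}^d : s agrees with w in at least t coordinates},
   which does not depend on w (binomial tail sum). *)
Fixpoint tail_count (d t : nat) : R :=
  match d with
  | O => if Nat.eqb t 0 then 1 else 0
  | S d' => tail_count d' (pred t) + tail_count d' t
  end.

(* tail_moment d t = sum of s_j over those s, divided by w_j (independent of j). *)
Definition tail_moment (d t : nat) : R :=
  match d with O => 0 | S d' => tail_count d' (pred t) - tail_count d' t end.

Lemma leb_S_pred t a : Nat.leb t (S a) = Nat.leb (pred t) a.
Proof. destruct t; reflexivity. Qed.

Lemma tail_count_spec d w t : length w = d ->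
  rsum (fun s => ind (Nat.leb t (agree s w))) (all_signs d) = tail_count d t.
Proof.
  revert w t; induction d; intros w t Hw.
  - destruct w; [|discriminate]. unfold rsum; simpl. destruct t; unfold ind; simpl; ring.
  - destruct w as [|b w]; [discriminate|]. injection Hw as Hw.
    simpl all_signs. rewrite rsum_app, !rsum_map. simpl agree.
    destruct b; simpl Bool.eqb; simpl plus;
      rewrite (rsum_ext (fun a => ind (Nat.leb t (S (agree a w))))
                 (fun a => ind (Nat.leb (pred t) (agree a w))))
        by (intros; rewrite leb_S_pred; reflexivity);
      rewrite !IHd by auto; simpl; ring.
Qed.

Lemma tail_moment_spec d w j t : length w = d -> (j < d)%nat ->
  rsum (fun s => ind (Nat.leb t (agree s w)) * coord s j) (all_signs d) = coord w j * tail_moment d t.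
Proof.
  revert w j t; induction d; intros w j t Hw Hj; [lia|].
  destruct w as [|b w]; [discriminate|]. injection Hw as Hw.
  simpl all_signs. rewrite rsum_app, !rsum_map. simpl agree.
  destruct j as [|j].
  - rewrite coord_cons_0.
    rewrite (rsum_ext _ (fun a => 1 * ind (Nat.leb (if b then pred t else t) (agree a w))))
      by (intros; destruct b; simpl; [rewrite leb_S_pred|]; unfold coord, sgn, ind; simpl; ring).
    rewrite (rsum_ext (fun a => ind (Nat.leb t (agree (false :: a) (b :: w))) * sgn false)
               (fun a => (-1) * ind (Nat.leb (if b then t else pred t) (agree a w))))
      by (intros; destruct b; simpl; [|rewrite leb_S_pred]; unfold coord, sgn, ind; simpl; ring).
    rewrite !rsum_scal, !tail_count_spec by auto. destruct b; simpl; ring.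
  - rewrite coord_cons_S.
    rewrite (rsum_ext _ (fun a => ind (Nat.leb (if b then pred t else t) (agree a w)) * coord a j))
      by (intros; destruct b; simpl; [rewrite leb_S_pred|]; reflexivity).
    rewrite (rsum_ext (fun a => ind (Nat.leb t (agree (false :: a) (b :: w))) * coord (false :: a) (S j))
               (fun a => ind (Nat.leb (if b then t else pred t) (agree a w)) * coord a j))
      by (intros; destruct b; simpl; [|rewrite leb_S_pred]; reflexivity).
    rewrite !IHd by lia. destruct d; [lia|]. destruct b; simpl; ring.
Qed.

Lemma tail_count_nonneg d t : 0 <= tail_count d t.
Proof.
  revert t; induction d; intros t; simpl; [destruct (Nat.eqb t 0); lra|].
  pose proof (IHd (pred t)); pose proof (IHd t). lra.
Qed.

Lemma tail_count_beyond d t : (d < t)%nat -> tail_count d t = 0.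
Proof.
  revert t; induction d; intros t H; simpl.
  - destruct t; [lia|reflexivity].
  - rewrite !IHd by lia. ring.
Qed.

Lemma tail_count_0 d : tail_count d 0 = 2 ^ d.
Proof. induction d; simpl; [reflexivity|]. rewrite IHd; ring. Qed.

Lemma tail_count_ge1 d t : (t <= d)%nat -> 1 <= tail_count d t.
Proof.
  revert t; induction d; intros t Ht.
  - replace t with 0%nat by lia. simpl; lra.
  - simpl. pose proof (tail_count_nonneg d (pred t)). pose proof (tail_count_nonneg d t).
    destruct (Nat.le_gt_cases t d) as [Htd|Htd].
    + pose proof (IHd t Htd). lra.
    + pose proof (IHd (pred t) ltac:(lia)). lra.
Qed.

(* Complement symmetry: "at least t agreements" vs "at least d+1-t disagreements". *)
Lemma tail_count_compl d t : (t <= S d)%nat -> tail_count d t + tail_count d (S d - t) = 2 ^ d.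
Proof.
  revert t; induction d; intros t Ht.
  - destruct t as [|[|t]]; simpl; try lia; ring.
  - destruct t as [|k].
    + rewrite Nat.sub_0_r, (tail_count_beyond (S d) (S (S d))), tail_count_0 by lia. ring.
    + change (tail_count (S d) (S k)) with (tail_count d k + tail_count d (S k)).
      replace (S (S d) - S k)%nat with (S d - k)%nat by lia.
      change (tail_count (S d) (S d - k))
        with (tail_count d (pred (S d - k)) + tail_count d (S d - k)).
      destruct (Nat.le_gt_cases k d) as [Hk|Hk].
      * pose proof (IHd k ltac:(lia)). pose proof (IHd (S k) ltac:(lia)).
        replace (pred (S d - k)) with (S d - S k)%nat by lia. simpl pow. lra.
      * replace k with (S d) by lia. replace (S d - S d)%nat with 0%nat by lia. simpl pred.
        rewrite (tail_count_beyond d (S (S d))), (tail_count_beyond d (S d)), tail_count_0 by lia.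
        simpl; ring.
Qed.

Lemma binom_n0 n : Binomial.C n 0 = 1.
Proof. unfold Binomial.C. rewrite Nat.sub_0_r. simpl. field. apply INR_fact_neq_0. Qed.

Lemma binom_nn n : Binomial.C n n = 1.
Proof. unfold Binomial.C. rewrite Nat.sub_diag. simpl. field. apply INR_fact_neq_0. Qed.

(* Exactly t agreements: the binomial coefficient. *)
Lemma tail_count_diff d t : (t <= d)%nat -> tail_count d t - tail_count d (S t) = Binomial.C d t.
Proof.
  revert t; induction d; intros t Ht.
  - replace t with 0%nat by lia. simpl. rewrite binom_n0. ring.
  - destruct t as [|k].
    + rewrite binom_n0. pose proof (IHd 0%nat ltac:(lia)) as H. rewrite binom_n0 in H.
      simpl. simpl in H. lra.
    + change (tail_count (S d) (S k)) with (tail_count d k + tail_count d (S k)).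
      change (tail_count (S d) (S (S k))) with (tail_count d (S k) + tail_count d (S (S k))).
      pose proof (IHd k ltac:(lia)) as H.
      destruct (Nat.lt_ge_cases k d) as [Hk|Hk].
      * pose proof (IHd (S k) ltac:(lia)). rewrite <- (pascal d k Hk). lra.
      * replace k with d in * by lia.
        rewrite (tail_count_beyond d (S d)), (tail_count_beyond d (S (S d))) in * by lia.
        rewrite binom_nn in *. lra.
Qed.

Lemma div2_double m : ((2 * m) / 2 = m)%nat.
Proof. pose proof (Nat.div_mod (2 * m) 2). pose proof (Nat.mod_upper_bound (2 * m) 2). lia. Qed.

Lemma div2_double_plus1 m : ((2 * m + 1) / 2 = m)%nat.
Proof. pose proof (Nat.div_mod (2 * m + 1) 2). pose proof (Nat.mod_upper_bound (2 * m + 1) 2). lia. Qed.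

Lemma parity_cases d :
  (exists m, d = (2 * m)%nat /\ Nat.even d = true) \/
  (exists m, d = (2 * m + 1)%nat /\ Nat.even d = false).
Proof.
  destruct (Nat.Even_or_Odd d) as [[m Hm]|[m Hm]].
  - left. exists m. split; auto. apply Nat.even_spec. exists m; auto.
  - right. exists m. split; auto. rewrite <- Nat.negb_odd, (proj2 (Nat.odd_spec d)); auto. exists m; auto.
Qed.

Lemma pow2_pred d : (1 <= d)%nat -> 2 ^ d = 2 * 2 ^ (d - 1).
Proof. intros H. destruct d; [lia|]. simpl. rewrite Nat.sub_0_r. reflexivity. Qed.

(* |T^+(w)| = C_d. *)
Lemma tail_count_half d : (1 <= d)%nat -> tail_count d (S (d / 2)) = Cd d.
Proof.
  intros Hd. unfold Cd. destruct (parity_cases d) as [[m [-> He]]|[m [-> He]]]; rewrite He.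
  - rewrite div2_double.
    pose proof (tail_count_compl (2 * m) m ltac:(lia)) as H.
    replace (S (2 * m) - m)%nat with (S m) in H by lia.
    pose proof (tail_count_diff (2 * m) m ltac:(lia)).
    rewrite (pow2_pred (2 * m)) in H by lia. lra.
  - rewrite div2_double_plus1.
    pose proof (tail_count_compl (2 * m + 1) (S m) ltac:(lia)) as H.
    replace (S (2 * m + 1) - S m)%nat with (S m) in H by lia.
    rewrite (pow2_pred (2 * m + 1)) in H by lia. lra.
Qed.

(* Both T^+(w) and T^-(w) are nonempty. *)
Lemma Cd_bounds d : (1 <= d)%nat -> 1 <= Cd d /\ 1 <= 2 ^ d - Cd d.
Proof.
  intros Hd. rewrite <- tail_count_half by auto.
  pose proof (Nat.div_mod d 2). pose proof (Nat.mod_upper_bound d 2).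
  pose proof (tail_count_compl d (S (d / 2)) ltac:(lia)).
  pose proof (tail_count_ge1 d (S d - S (d / 2)) ltac:(lia)).
  split; [apply tail_count_ge1; lia | lra].
Qed.

Definition mid_binom (d : nat) : R := Binomial.C (d - 1) (d / 2).

Lemma binom_pos n k : 0 < Binomial.C n k.
Proof.
  unfold Binomial.C. apply Rdiv_lt_0_compat;
    [apply INR_fact_lt_0 | apply Rmult_lt_0_compat; apply INR_fact_lt_0].
Qed.

Lemma tail_moment_half d : (1 <= d)%nat -> tail_moment d (S (d / 2)) = mid_binom d.
Proof.
  intros Hd. destruct d; [lia|]. unfold mid_binom. simpl tail_moment.
  replace (S d - 1)%nat with d by lia. apply tail_count_diff.
  pose proof (Nat.div_mod (S d) 2). pose proof (Nat.mod_upper_bound (S d) 2). lia.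
Qed.

Lemma sum_all_signs_1 d : rsum (fun _ : list bool => 1) (all_signs d) = 2 ^ d.
Proof.
  rewrite <- tail_count_0, <- (tail_count_spec d (repeat true d) 0) by apply repeat_length.
  reflexivity.
Qed.

Lemma prob_V_cons d x b w :
  prob_V (S d) x (b :: w) = (/ 2 + / 2 * x 0%nat * sgn b) * prob_V d (fun j => x (S j)) w.
Proof. unfold prob_V. rewrite rprod_seq_succ. reflexivity. Qed.

Lemma prob_V_total d x : rsum (prob_V d x) (all_signs d) = 1.
Proof.
  revert x; induction d; intros x.
  - unfold rsum, prob_V, rprod; simpl; ring.
  - simpl all_signs. rewrite rsum_app, !rsum_map.
    rewrite !(rsum_ext (fun a => prob_V (S d) x (_ :: a)) _ _ (fun a => prob_V_cons d x _ a)).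
    rewrite !rsum_scal, IHd. unfold sgn; field.
Qed.

Lemma prob_V_mean d x j : (j < d)%nat ->
  rsum (fun w => prob_V d x w * coord w j) (all_signs d) = x j.
Proof.
  revert x j; induction d; intros x j Hj; [lia|].
  simpl all_signs. rewrite rsum_app, !rsum_map. destruct j as [|j].
  - rewrite !(rsum_ext (fun a => prob_V (S d) x (?[b] :: a) * coord (?b :: a) 0)
                 (fun a => (/ 2 + / 2 * x 0%nat * sgn ?b) * sgn ?b * prob_V d (fun j => x (S j)) a))
      by (intros; rewrite prob_V_cons; unfold coord; simpl; ring).
    rewrite !rsum_scal, prob_V_total. unfold sgn; field.
  - rewrite !(rsum_ext (fun a => prob_V (S d) x (?[b] :: a) * coord (?b :: a) (S j))
                 (fun a => (/ 2 + / 2 * x 0%nat * sgn ?b) * (prob_V d (fun j => x (S j)) a * coord a j)))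
      by (intros; rewrite prob_V_cons, coord_cons_S; ring).
    rewrite !rsum_scal, IHd by lia. unfold sgn; field.
Qed.

Lemma prob_V_nonneg d x w : (forall j, (j < d)%nat -> -1 <= x j <= 1) -> 0 <= prob_V d x w.
Proof.
  intros Hx. unfold prob_V. apply rprod_nonneg. intros j Hj. apply in_seq in Hj.
  destruct (Hx j ltac:(lia)). destruct (coord_cases w j) as [-> | ->]; lra.
Qed.

(** * Mechanism-1 *)

Lemma card_Tplus_eq d B w : (1 <= d)%nat -> 0 < B -> length w = d -> card_Tplus d B w = Cd d.
Proof.
  intros Hd HB Hw. unfold card_Tplus. rewrite rsum_length_filter.
  rewrite (rsum_ext_in _ (fun s => ind (Nat.leb (S (d / 2)) (agree s w)))).
  - rewrite tail_count_spec by auto. apply tail_count_half; auto.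
  - intros s Hs. rewrite (Tplus_test_agree d B s w true false) by (auto; apply all_signs_length; auto).
    unfold ind. destruct (Nat.leb _ _); reflexivity.
Qed.

Lemma card_Tminus_eq d B w : (1 <= d)%nat -> 0 < B -> length w = d ->
  card_Tminus d B w = 2 ^ d - Cd d.
Proof.
  intros Hd HB Hw. unfold card_Tminus. rewrite rsum_length_filter.
  rewrite (rsum_ext_in _ (fun s => 1 - ind (Nat.leb (S (d / 2)) (agree s w)))).
  - rewrite rsum_minus, sum_all_signs_1, tail_count_spec, tail_count_half by auto. reflexivity.
  - intros s Hs. rewrite (Tplus_test_agree d B s w false true) by (auto; apply all_signs_length; auto).
    unfold ind. destruct (Nat.leb _ _); ring.
Qed.

Definition cond_pmf d al B s w : R :=
  if Rlt_dec 0 (dotBy d B s w) then al / card_Tplus d B w else (1 - al) / card_Tminus d B w.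

Lemma mech_pmf_cond d al B x s :
  mech_pmf d al B x s = rsum (fun w => prob_V d x w * cond_pmf d al B s w) (all_signs d).
Proof. reflexivity. Qed.

Lemma cond_pmf_eq d al B s w : (1 <= d)%nat -> 0 < B -> length w = d -> In s (all_signs d) ->
  cond_pmf d al B s w =
    ind (Nat.leb (S (d / 2)) (agree s w)) * (al / Cd d)
    + (1 - ind (Nat.leb (S (d / 2)) (agree s w))) * ((1 - al) / (2 ^ d - Cd d)).
Proof.
  intros Hd HB Hw Hs. unfold cond_pmf. rewrite card_Tplus_eq, card_Tminus_eq by auto.
  rewrite (Tplus_test_agree d B s w) by (auto; apply all_signs_length; auto).
  unfold ind. destruct (Nat.leb _ _); ring.
Qed.

Lemma cond_pmf_total d al B w : (1 <= d)%nat -> 0 < B -> length w = d ->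
  rsum (fun s => cond_pmf d al B s w) (all_signs d) = 1.
Proof.
  intros Hd HB Hw. rewrite (rsum_ext_in _ _ _ (fun s Hs => cond_pmf_eq d al B s w Hd HB Hw Hs)).
  rewrite rsum_plus, !rsum_scal_r, rsum_minus, sum_all_signs_1, tail_count_spec,
    tail_count_half by auto.
  destruct (Cd_bounds d Hd). field. lra.
Qed.

Lemma cond_pmf_mean d al B w j : (1 <= d)%nat -> 0 < B -> length w = d -> (j < d)%nat ->
  rsum (fun s => cond_pmf d al B s w * (B * coord s j)) (all_signs d) =
  B * mid_binom d * (al / Cd d - (1 - al) / (2 ^ d - Cd d)) * coord w j.
Proof.
  intros Hd HB Hw Hj.
  rewrite (rsum_ext_in _ (fun s =>
      (B * (al / Cd d) - B * ((1 - al) / (2 ^ d - Cd d))) * (ind (Nat.leb (S (d / 2)) (agree s w)) * coord s j)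
      + B * ((1 - al) / (2 ^ d - Cd d)) * (ind (Nat.leb 0 (agree s w)) * coord s j))).
  - rewrite rsum_plus, !rsum_scal, !tail_moment_spec, tail_moment_half by auto.
    replace (tail_moment d 0) with 0 by (destruct d; simpl; ring). ring.
  - intros s Hs. rewrite cond_pmf_eq by auto.
    replace (ind (Nat.leb 0 (agree s w))) with 1 by reflexivity. ring.
Qed.

Lemma mid_binom_odd_eq d :
  Binomial.C (d - 1) (if Nat.even d then d / 2 else (d - 1) / 2) = mid_binom d.
Proof.
  unfold mid_binom.
  destruct (parity_cases d) as [[m [-> He]]|[m [-> He]]]; rewrite He; auto.
  replace (2 * m + 1 - 1)%nat with (2 * m)%nat by lia.
  rewrite div2_double, div2_double_plus1. reflexivity.
Qed.

Lemma B_ed_eq d eps delta :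
  B_ed d eps delta = (2 ^ d + Cd d * (exp eps - 1)) / (mid_binom d * (exp eps + 2 ^ d * delta - 1)).
Proof.
  unfold B_ed. rewrite <- (mid_binom_odd_eq d). destruct (Nat.even d); reflexivity.
Qed.

Lemma div_nonneg a b : 0 <= a -> 0 <= b -> 0 <= a / b.
Proof.
  intros Ha [Hb| <-]; [| unfold Rdiv; rewrite Rinv_0; lra].
  unfold Rdiv; apply Rmult_le_pos; [auto | left; apply Rinv_0_lt_compat; auto].
Qed.

Lemma div_le_1 a b : 0 < b -> a <= b -> a / b <= 1.
Proof. intros. apply (Rmult_le_reg_r b); auto. unfold Rdiv. rewrite Rmult_assoc, Rinv_l; lra. Qed.

Section Mechanism1.
Variables (d : nat) (eps delta : R).
Hypothesis Hd : (1 <= d)%nat.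
Hypothesis Heps : 0 < eps.
Hypothesis Hdelta : 0 <= delta.
Hypothesis HCd : Cd d * delta < 1.

Let al := alpha_ed d eps delta.
Let B := B_ed d eps delta.

Lemma B_pos : 0 < B.
Proof.
  unfold B. rewrite B_ed_eq. pose proof (exp_ineq1_le eps). destruct (Cd_bounds d Hd).
  pose proof (binom_pos (d - 1) (d / 2)); fold (mid_binom d) in *. apply Rdiv_lt_0_compat; [nra | apply Rmult_lt_0_compat; nra].
Qed.

Lemma alpha_range : 0 <= al <= 1.
Proof.
  pose proof (exp_ineq1_le eps). destruct (Cd_bounds d Hd). unfold al, alpha_ed.
  destruct (Nat.even d).
  - assert (0 < (exp eps - 1) * Cd d + 2 ^ d) by nra.
    assert (0 <= delta * Cd d * (2 ^ d - Cd d)) by (repeat apply Rmult_le_pos; lra).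
    assert (0 <= (1 - Cd d * delta) * (2 ^ d - Cd d)) by (apply Rmult_le_pos; lra).
    split; [apply div_nonneg | apply div_le_1]; nra.
  - split; [apply div_nonneg | apply div_le_1]; nra.
Qed.

(* The parameters are tuned exactly so that the mechanism is unbiased. *)
Lemma unbiasing_constant : B * mid_binom d * (al / Cd d - (1 - al) / (2 ^ d - Cd d)) = 1.
Proof.
  unfold B. rewrite B_ed_eq. pose proof (exp_ineq1_le eps). destruct (Cd_bounds d Hd).
  pose proof (binom_pos (d - 1) (d / 2)); fold (mid_binom d) in *. unfold al, alpha_ed.
  destruct (parity_cases d) as [[m [Hm He]]|[m [Hm He]]]; rewrite He.
  - assert (0 < (exp eps - 1) * Cd d + 2 ^ d) by nra. field. repeat split; nra.
  - unfold Cd in *. rewrite He in *. rewrite (pow2_pred d Hd) in *. field. repeat split; nra.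
Qed.

Lemma mech_total x : rsum (mech_pmf d al B x) (all_signs d) = 1.
Proof.
  rewrite (rsum_ext _ _ _ (mech_pmf_cond d al B x)), rsum_swap.
  rewrite <- (prob_V_total d x). apply rsum_ext_in. intros w Hw.
  rewrite rsum_scal, cond_pmf_total; [ring | auto | apply B_pos | apply all_signs_length; auto].
Qed.

Lemma mech_mean x j : (j < d)%nat ->
  rsum (fun s => mech_pmf d al B x s * (B * coord s j)) (all_signs d) = x j.
Proof.
  intros Hj.
  rewrite (rsum_ext _ (fun s => rsum (fun w => prob_V d x w * (cond_pmf d al B s w * (B * coord s j))) (all_signs d))).
  2:{ intros s. rewrite mech_pmf_cond, <- rsum_scal_r. apply rsum_ext; intros; ring. }
  rewrite rsum_swap, <- (prob_V_mean d x j Hj). apply rsum_ext_in. intros w Hw.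
  rewrite rsum_scal, cond_pmf_mean, unbiasing_constant;
    [ring | auto | apply B_pos | apply all_signs_length; auto | auto].
Qed.

Lemma mech_nonneg x s : (forall j, (j < d)%nat -> -1 <= x j <= 1) -> 0 <= mech_pmf d al B x s.
Proof.
  intros Hx. rewrite mech_pmf_cond. apply rsum_nonneg. intros w _.
  apply Rmult_le_pos; [apply prob_V_nonneg; auto|].
  pose proof alpha_range. unfold cond_pmf, card_Tplus, card_Tminus.
  destruct (Rlt_dec _ _); apply div_nonneg; try lra; apply pos_INR.
Qed.

(* An unbiased estimator of 1 taking values in [-B, B] forces B >= 1. *)
Lemma B_ge_1 : 1 <= B.
Proof.
  pose proof (mech_mean (fun _ => 1) 0%nat ltac:(lia)) as Hmean.
  assert (Hle : rsum (fun s => mech_pmf d al B (fun _ => 1) s * (B * coord s 0)) (all_signs d)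
                <= rsum (fun s => mech_pmf d al B (fun _ => 1) s * B) (all_signs d)).
  { apply rsum_le. intros s _. pose proof (mech_nonneg (fun _ => 1) s ltac:(intros; lra)).
    pose proof B_pos. destruct (coord_cases s 0) as [-> | ->]; nra. }
  rewrite rsum_scal_r, mech_total in Hle. lra.
Qed.

End Mechanism1.

(** * Size of B *)

Definition central_binom (r : nat) : R := Binomial.C (2 * r) r.

Lemma INR_fact_succ n : INR (fact (S n)) = INR (S n) * INR (fact n).
Proof. apply mult_INR. Qed.

Lemma central_binom_succ r :
  central_binom (S r) = central_binom r * (2 * (2 * INR r + 1) / (INR r + 1)).
Proof.
  unfold central_binom, Binomial.C.
  replace (2 * S r)%nat with (S (S (2 * r))) by lia.
  replace (S (S (2 * r)) - S r)%nat with (S r) by lia. replace (2 * r - r)%nat with r by lia.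
  rewrite !INR_fact_succ, !S_INR, mult_INR. simpl INR.
  pose proof (INR_fact_lt_0 r). pose proof (INR_fact_lt_0 (2 * r)). pose proof (pos_INR r).
  field. lra.
Qed.

(* 4^r <= 2 sqrt(r) binom(2r, r), in squared form. *)
Lemma central_binom_lower r : (1 <= r)%nat -> 2 ^ (4 * r) <= 4 * INR r * central_binom r ^ 2.
Proof.
  intros Hr. induction r as [|r IH]; [lia|]. destruct r as [|r].
  - unfold central_binom, Binomial.C. simpl. lra.
  - specialize (IH ltac:(lia)). set (r' := S r) in *.
    assert (Hr' : 1 <= INR r') by (unfold r'; rewrite S_INR; pose proof (pos_INR r); lra).
    pose proof (binom_pos (2 * r') r') as Hc. fold (central_binom r') in Hc.
    rewrite central_binom_succ. replace (4 * S r')%nat with (4 + 4 * r')%nat by lia.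
    rewrite pow_add, S_INR.
    replace (4 * (INR r' + 1) * (central_binom r' * (2 * (2 * INR r' + 1) / (INR r' + 1))) ^ 2)
      with (16 * central_binom r' ^ 2 * (2 * INR r' + 1) ^ 2 / (INR r' + 1)) by (field; lra).
    apply (Rmult_le_reg_r (INR r' + 1)); [lra|].
    replace (16 * central_binom r' ^ 2 * (2 * INR r' + 1) ^ 2 / (INR r' + 1) * (INR r' + 1))
      with (16 * central_binom r' ^ 2 * (2 * INR r' + 1) ^ 2) by (field; lra).
    assert (4 * INR r' * (INR r' + 1) <= (2 * INR r' + 1) ^ 2) by nra.
    assert (0 <= central_binom r' ^ 2) by nra. nra.
Qed.

Lemma mid_binom_even r : mid_binom (2 * S r) = central_binom (S r) / 2.
Proof.
  unfold mid_binom, central_binom.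
  replace (2 * S r - 1)%nat with (S (2 * r)) by lia. rewrite div2_double.
  replace (2 * S r)%nat with (S (S (2 * r))) by lia.
  rewrite <- (pascal (S (2 * r)) r) by lia.
  rewrite (pascal_step1 (S (2 * r)) r) by lia.
  replace (S (2 * r) - r)%nat with (S r) by lia. field.
Qed.

(* 2^d <= 2 sqrt(2 d) binom(d-1, floor(d/2)), in squared form. *)
Lemma mid_binom_lower d : (1 <= d)%nat -> (2 ^ d) ^ 2 <= 8 * INR d * mid_binom d ^ 2.
Proof.
  intros Hd. rewrite <- pow_mult.
  destruct (parity_cases d) as [[m [-> _]]|[m [-> _]]].
  - destruct m as [|r]; [lia|]. rewrite mid_binom_even.
    pose proof (central_binom_lower (S r) ltac:(lia)).
    replace (2 * S r * 2)%nat with (4 * S r)%nat by lia. rewrite mult_INR. simpl (INR 2). lra.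
  - unfold mid_binom. replace (2 * m + 1 - 1)%nat with (2 * m)%nat by lia.
    rewrite div2_double_plus1. fold (central_binom m).
    replace ((2 * m + 1) * 2)%nat with (2 + 4 * m)%nat by lia. rewrite pow_add.
    rewrite plus_INR, mult_INR. simpl (INR 1); simpl (INR 2).
    pose proof (pos_INR m). pose proof (binom_pos (2 * m) m). fold (central_binom m) in *.
    destruct m as [|m].
    + unfold central_binom, Binomial.C. simpl. lra.
    + pose proof (central_binom_lower (S m) ltac:(lia)).
      assert (0 <= central_binom (S m) ^ 2) by nra. nra.
Qed.

Lemma scale_bound d eps delta : (1 <= d)%nat -> 0 < eps <= 1 -> 0 <= delta -> Cd d * delta < 1 ->
  ((B_ed d eps delta + 1) * (eps + 2 ^ d * delta)) ^ 2 <= 288 * INR d.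
Proof.
  intros Hd [Heps Heps1] Hdelta HCd.
  pose proof (exp_ineq1_le eps) as He1. destruct (Cd_bounds d Hd) as [HC1 HC2].
  pose proof (mid_binom_lower d Hd) as Hmid.
  pose proof (binom_pos (d - 1) (d / 2)) as Hm; fold (mid_binom d) in Hm.
  pose proof (B_ge_1 d eps delta Hd Heps Hdelta HCd) as HB1.
  assert (He3 : exp eps <= 3).
  { pose proof exp_le_3. destruct Heps1 as [Hlt| ->]; [pose proof (exp_increasing _ _ Hlt)|]; lra. }
  set (B := B_ed d eps delta) in *. set (E := eps + 2 ^ d * delta).
  assert (HE : 0 <= E) by (unfold E; pose proof (pow_le 2 d); nra).
  assert (HBm : B * E * mid_binom d <= 3 * 2 ^ d).
  { unfold B, E. rewrite B_ed_eq.
    set (P := 2 ^ d) in *. set (C := Cd d) in *. set (m := mid_binom d) in *. set (e := exp eps) in *.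
    assert (HD : 0 < e + P * delta - 1) by nra.
    replace ((P + C * (e - 1)) / (m * (e + P * delta - 1)) * (eps + P * delta) * m)
      with ((P + C * (e - 1)) * ((eps + P * delta) / (e + P * delta - 1))) by (field; lra).
    assert (Hr : (eps + P * delta) / (e + P * delta - 1) <= 1) by (apply div_le_1; lra).
    assert (Hr0 : 0 <= (eps + P * delta) / (e + P * delta - 1)) by (apply div_nonneg; nra).
    assert (0 <= P + C * (e - 1)) by nra.
    assert (P + C * (e - 1) <= 3 * P) by nra.
    nra. }
  assert (HBE : 0 <= B * E) by nra.
  assert (Hsq : (B * E * mid_binom d) ^ 2 <= 9 * (2 ^ d) ^ 2).
  { assert (0 <= B * E * mid_binom d) by nra. nra. }
  assert (HBE2 : (B * E) ^ 2 <= 72 * INR d).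
  { apply (Rmult_le_reg_r (mid_binom d ^ 2)); [nra|].
    replace ((B * E) ^ 2 * mid_binom d ^ 2) with ((B * E * mid_binom d) ^ 2) by ring. lra. }
  assert ((B + 1) * E <= 2 * (B * E)) by nra.
  assert (0 <= (B + 1) * E) by nra.
  nra.
Qed.

(** * Concentration *)

(* Independence: the expectation of a product of per-sample factors under the
   product law factorizes into per-sample expectations. *)
Lemma rsum_outcomes_prod d N (h : nat -> list bool -> R) :
  rsum (fun ys => rprod (fun i => h i (nth i ys [])) (seq 0 N)) (all_outcomes d N) =
  rprod (fun i => rsum (h i) (all_signs d)) (seq 0 N).
Proof.
  revert h; induction N; intros h.
  - unfold rsum, rprod; simpl; ring.
  - simpl all_outcomes. rewrite rsum_concat, rsum_map, rprod_seq_succ.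
    rewrite (rsum_ext _ (fun s => h 0%nat s *
               rsum (fun ys => rprod (fun i => h (S i) (nth i ys [])) (seq 0 N)) (all_outcomes d N))).
    + rewrite rsum_scal_r, (IHN (fun i => h (S i))). reflexivity.
    + intros s. rewrite rsum_map, <- rsum_scal. apply rsum_ext. intros ys.
      rewrite rprod_seq_succ. reflexivity.
Qed.

(* e^v <= 1 + v + 2 v^2 on [-1, 1]: write v = 2u and use e^u (1 - u) <= 1. *)
Lemma exp_quadratic_bound v : Rabs v <= 1 -> exp v <= 1 + v + 2 * v ^ 2.
Proof.
  intros Hv. assert (Hv2 : -1 <= v <= 1) by (unfold Rabs in Hv; destruct (Rcase_abs v); lra). clear Hv.
  set (u := v / 2). assert (Hu : -1/2 <= u <= 1/2) by (unfold u; lra).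
  assert (Hinv : exp u * exp (- u) = 1)
    by (rewrite <- exp_plus; replace (u + - u) with 0 by ring; apply exp_0).
  pose proof (exp_ineq1_le (- u)). pose proof (exp_pos u).
  assert (Hq : 0 <= exp u * (1 - u) <= 1) by nra.
  replace (exp v) with (exp u * exp u) by (rewrite <- exp_plus; unfold u; f_equal; field).
  replace v with (2 * u) by (unfold u; field).
  assert (H2 : 1 <= (1 - u) ^ 2 * (1 + 2 * u + 8 * u ^ 2)).
  { assert (0 <= u ^ 2 * (5 - 14 * u + 8 * u ^ 2)) by (apply Rmult_le_pos; nra). nra. }
  assert (H3 : 0 < (1 - u) ^ 2) by nra.
  apply (Rmult_le_reg_r ((1 - u) ^ 2)); auto. nra.
Qed.

Lemma hoeffding_lemma {A} (L : list A) (p Y : A -> R) (c lam : R) :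
  (forall a, In a L -> 0 <= p a) -> rsum p L = 1 -> rsum (fun a => p a * Y a) L = 0 ->
  (forall a, In a L -> Rabs (Y a) <= c) -> Rabs lam * c <= 1 ->
  rsum (fun a => p a * exp (lam * Y a)) L <= exp (2 * lam ^ 2 * c ^ 2).
Proof.
  intros Hp Hs Hm HY Hl.
  apply Rle_trans with (rsum (fun a => p a + lam * (p a * Y a) + 2 * lam ^ 2 * c ^ 2 * p a) L).
  - apply rsum_le. intros a Ha. pose proof (HY a Ha). pose proof (Hp a Ha).
    assert (Hc : 0 <= c) by (pose proof (Rabs_pos (Y a)); lra).
    assert (Hsmall : Rabs (lam * Y a) <= 1).
    { rewrite Rabs_mult. apply Rle_trans with (Rabs lam * c); auto.
      apply Rmult_le_compat_l; auto. apply Rabs_pos. }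
    pose proof (exp_quadratic_bound _ Hsmall).
    assert ((lam * Y a) ^ 2 <= lam ^ 2 * c ^ 2).
    { rewrite <- !Rsqr_pow2, Rsqr_mult. apply Rmult_le_compat_l; [apply Rle_0_sqr|].
      apply Rsqr_le_abs_1. rewrite (Rabs_pos_eq c); auto. }
    nra.
  - rewrite !rsum_plus, !rsum_scal, Hm, Hs.
    pose proof (exp_ineq1_le (2 * lam ^ 2 * c ^ 2)). lra.
Qed.

Lemma exp_pow a n : exp a ^ n = exp (INR n * a).
Proof.
  induction n; simpl; [rewrite Rmult_0_l, exp_0; reflexivity|].
  rewrite IHn, <- exp_plus. f_equal. destruct n; simpl; ring.
Qed.

Lemma exp_le_compat a b : a <= b -> exp a <= exp b.
Proof. intros [H| ->]; [left; apply exp_increasing; auto | lra]. Qed.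

Lemma fold_max_gt (f : nat -> R) l T :
  0 <= T -> T < fold_right Rmax 0 (map f l) -> exists j, In j l /\ T < f j.
Proof.
  induction l; simpl; intros HT H; [lra|]. unfold Rmax in H at 1. destruct (Rle_dec _ _).
  - destruct (IHl HT H) as [j [Hj Hj']]. exists j; auto.
  - exists a; auto.
Qed.

Section Concentration.
Variables (d N : nat) (eps delta : R) (x : nat -> nat -> R).
Hypothesis Hd : (1 <= d)%nat.
Hypothesis HN : (1 <= N)%nat.
Hypothesis Heps : 0 < eps.
Hypothesis Hdelta : 0 <= delta.
Hypothesis HCd : Cd d * delta < 1.
Hypothesis Hx : forall i j, (i < N)%nat -> (j < d)%nat -> -1 <= x i j <= 1.

Let al := alpha_ed d eps delta.
Let B := B_ed d eps delta.
Let J := joint_pmf d N al B x.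

Definition centered_sum (ys : list (list bool)) (j : nat) : R :=
  rsum (fun i => B_ed d eps delta * coord (nth i ys []) j - x i j) (seq 0 N).

Lemma deviation_eq ys j : Zj d N eps delta ys j - Xj N x j = / INR N * centered_sum ys j.
Proof. unfold Zj, Xj, centered_sum. rewrite rsum_minus. ring. Qed.

Lemma joint_total : rsum J (all_outcomes d N) = 1.
Proof.
  unfold J, joint_pmf. rewrite (rsum_outcomes_prod d N (fun i s => mech_pmf d al B (x i) s)).
  rewrite (rprod_ext_in _ (fun _ => 1)); [rewrite rprod_const, pow1; reflexivity|].
  intros i _. apply mech_total; auto.
Qed.

Lemma joint_nonneg ys : 0 <= J ys.
Proof.
  unfold J, joint_pmf. apply rprod_nonneg. intros i Hi. apply in_seq in Hi.
  apply mech_nonneg; auto. intros; apply Hx; lia.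
Qed.

Lemma centered_sum_mgf mu j : (j < d)%nat -> Rabs mu * (B + 1) <= 1 ->
  rsum (fun ys => J ys * exp (mu * centered_sum ys j)) (all_outcomes d N)
  <= exp (INR N * (2 * mu ^ 2 * (B + 1) ^ 2)).
Proof.
  intros Hj Hmu.
  set (h := fun i s => mech_pmf d al B (x i) s * exp (mu * (B * coord s j - x i j))).
  rewrite (rsum_ext _ (fun ys => rprod (fun i => h i (nth i ys [])) (seq 0 N))).
  2:{ intros ys. unfold J, joint_pmf, centered_sum, h.
      rewrite <- rsum_scal, exp_rsum, <- rprod_mult. reflexivity. }
  rewrite rsum_outcomes_prod.
  replace (exp (INR N * (2 * mu ^ 2 * (B + 1) ^ 2)))
    with (rprod (fun _ => exp (2 * mu ^ 2 * (B + 1) ^ 2)) (seq 0 N))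
    by (rewrite rprod_const, length_seq, exp_pow; reflexivity).
  apply rprod_le. intros i Hi. apply in_seq in Hi.
  assert (Hxi : forall k, (k < d)%nat -> -1 <= x i k <= 1) by (intros; apply Hx; lia).
  split.
  - apply rsum_nonneg. intros s _. apply Rmult_le_pos; [apply mech_nonneg; auto | left; apply exp_pos].
  - apply hoeffding_lemma; auto.
    + intros s _. apply mech_nonneg; auto.
    + apply mech_total; auto.
    + rewrite (rsum_ext _ (fun s => mech_pmf d al B (x i) s * (B * coord s j) - x i j * mech_pmf d al B (x i) s))
        by (intros; ring).
      rewrite rsum_minus, rsum_scal. unfold al, B. rewrite mech_mean, mech_total by auto. ring.
    + intros s _. destruct (Hxi j Hj). pose proof (B_pos d eps delta Hd Heps Hdelta) as HB.
      fold B in HB. apply Rabs_le. destruct (coord_cases s j) as [-> | ->]; lra.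
Qed.

(* Pointwise Markov/union domination of the failure indicator. *)
Lemma failure_indicator_bound ys T lam : 0 <= T -> 0 < lam ->
  1 - indic (maxdev d N eps delta x ys <= T) <=
  rsum (fun j => exp (lam * centered_sum ys j - lam * INR N * T)
                 + exp (- lam * centered_sum ys j - lam * INR N * T)) (seq 0 d).
Proof.
  intros HT Hlam.
  set (g := fun j => exp (lam * centered_sum ys j - lam * INR N * T)
                     + exp (- lam * centered_sum ys j - lam * INR N * T)).
  assert (Hg : forall j, 0 <= g j)
    by (intros; unfold g; pose proof (exp_pos (lam * centered_sum ys j - lam * INR N * T));
        pose proof (exp_pos (- lam * centered_sum ys j - lam * INR N * T)); lra).
  unfold indic. destruct (excluded_middle_informative _) as [Hin|Hout].
  - pose proof (rsum_nonneg g (seq 0 d) (fun j _ => Hg j)). unfold g in *. lra.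
  - apply Rnot_le_lt in Hout. apply fold_max_gt in Hout; auto. destruct Hout as [j [Hj Hgt]].
    rewrite deviation_eq, Rabs_mult, Rabs_inv, (Rabs_pos_eq (INR N)) in Hgt by apply pos_INR.
    assert (HNp : 0 < INR N) by (apply lt_0_INR; lia).
    assert (HS : INR N * T < Rabs (centered_sum ys j)).
    { apply (Rmult_lt_reg_l (/ INR N)); [apply Rinv_0_lt_compat; auto|].
      rewrite <- Rmult_assoc, Rinv_l, Rmult_1_l; lra. }
    apply Rle_trans with (g j); [| apply (rsum_ge_term g); auto].
    unfold g. pose proof (exp_pos (lam * centered_sum ys j - lam * INR N * T)).
    pose proof (exp_pos (- lam * centered_sum ys j - lam * INR N * T)).
    unfold Rabs in HS. destruct (Rcase_abs _).
    + pose proof (exp_ineq1_le (- lam * centered_sum ys j - lam * INR N * T)). nra.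
    + pose proof (exp_ineq1_le (lam * centered_sum ys j - lam * INR N * T)). nra.
Qed.

Lemma chernoff_union_bound T lam : 0 <= T -> 0 < lam -> lam * (B + 1) <= 1 ->
  rsum (fun ys => J ys * indic (maxdev d N eps delta x ys <= T)) (all_outcomes d N) >=
  1 - 2 * INR d * exp (- lam * INR N * T + INR N * (2 * lam ^ 2 * (B + 1) ^ 2)).
Proof.
  intros HT Hlam Hlc.
  set (F := fun ys => rsum (fun j => exp (lam * centered_sum ys j - lam * INR N * T)
                 + exp (- lam * centered_sum ys j - lam * INR N * T)) (seq 0 d)).
  assert (Hfail : rsum (fun ys => J ys * indic (maxdev d N eps delta x ys <= T)) (all_outcomes d N)
                  >= 1 - rsum (fun ys => J ys * F ys) (all_outcomes d N)).
  { rewrite <- joint_total. apply Rle_ge. rewrite <- rsum_minus. apply rsum_le. intros ys _.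
    pose proof (failure_indicator_bound ys T lam HT Hlam). pose proof (joint_nonneg ys).
    unfold F. nra. }
  assert (Hmgf : rsum (fun ys => J ys * F ys) (all_outcomes d N)
                 <= 2 * INR d * exp (- lam * INR N * T + INR N * (2 * lam ^ 2 * (B + 1) ^ 2))).
  { unfold F.
    rewrite (rsum_ext _ (fun ys => rsum (fun j =>
        exp (- lam * INR N * T) * (J ys * exp (lam * centered_sum ys j))
        + exp (- lam * INR N * T) * (J ys * exp (- lam * centered_sum ys j))) (seq 0 d))).
    2:{ intros ys. rewrite <- rsum_scal. apply rsum_ext. intros j.
        replace (lam * centered_sum ys j - lam * INR N * T)
          with (lam * centered_sum ys j + - lam * INR N * T) by ring.
        replace (- lam * centered_sum ys j - lam * INR N * T)
          with (- lam * centered_sum ys j + - lam * INR N * T) by ring.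
        rewrite !exp_plus. ring. }
    rewrite rsum_swap.
    replace (2 * INR d * exp (- lam * INR N * T + INR N * (2 * lam ^ 2 * (B + 1) ^ 2)))
      with (rsum (fun _ => 2 * exp (- lam * INR N * T + INR N * (2 * lam ^ 2 * (B + 1) ^ 2))) (seq 0 d))
      by (rewrite rsum_const, length_seq; ring).
    apply rsum_le. intros j Hj. apply in_seq in Hj. rewrite rsum_plus, !rsum_scal.
    assert (Rabs lam * (B + 1) <= 1) by (rewrite Rabs_pos_eq; lra).
    assert (Rabs (- lam) * (B + 1) <= 1) by (rewrite Rabs_Ropp, Rabs_pos_eq; lra).
    pose proof (centered_sum_mgf lam j ltac:(lia) H) as M1.
    pose proof (centered_sum_mgf (- lam) j ltac:(lia) H0) as M2.
    replace ((- lam) ^ 2) with (lam ^ 2) in M2 by ring.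
    rewrite exp_plus. pose proof (exp_pos (- lam * INR N * T)). nra. }
  lra.
Qed.

(* With the Chernoff parameter lam = sqrt(L/N) / (2 (B + 1)): a deviation of
   3 (B + 1) sqrt(L/N) fails with probability at most 2 d e^(-L). *)
Lemma concentration T L : 0 < L <= INR N -> 3 * (B + 1) * sqrt (L / INR N) <= T ->
  rsum (fun ys => J ys * indic (maxdev d N eps delta x ys <= T)) (all_outcomes d N) >=
  1 - 2 * INR d * exp (- L).
Proof.
  intros HL HT.
  assert (HNr : 0 < INR N) by (apply lt_0_INR; lia).
  pose proof (B_pos d eps delta Hd Heps Hdelta) as HB. fold B in HB.
  set (s := sqrt (L / INR N)) in *.
  assert (Hs2 : s * s = L / INR N) by (apply sqrt_sqrt; apply div_nonneg; lra).
  assert (Hspos : 0 < s) by (apply sqrt_lt_R0; apply Rdiv_lt_0_compat; lra).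
  assert (Hs1 : s <= 1) by (rewrite <- sqrt_1; apply sqrt_le_1_alt, div_le_1; lra).
  set (lam := s / (2 * (B + 1))).
  assert (Hlam : 0 < lam) by (apply Rdiv_lt_0_compat; lra).
  assert (Hlc : lam * (B + 1) <= 1)
    by (unfold lam; replace (s / (2 * (B + 1)) * (B + 1)) with (s / 2) by (field; lra); lra).
  pose proof (chernoff_union_bound T lam ltac:(nra) Hlam Hlc) as Hcb.
  assert (Hexp : - lam * INR N * T + INR N * (2 * lam ^ 2 * (B + 1) ^ 2) <= - L).
  { assert (Hlt : lam * INR N * (3 * (B + 1) * s) <= lam * INR N * T)
      by (apply Rmult_le_compat_l; nra).
    replace (lam * INR N * (3 * (B + 1) * s)) with (3 / 2 * (INR N * (s * s))) in Hlt
      by (unfold lam; field; lra).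
    replace (INR N * (2 * lam ^ 2 * (B + 1) ^ 2)) with (1 / 2 * (INR N * (s * s)))
      by (unfold lam; field; lra).
    rewrite Hs2 in *. replace (INR N * (L / INR N)) with L in * by (field; lra). lra. }
  pose proof (exp_le_compat _ _ Hexp). pose proof (pos_INR d). nra.
Qed.

End Concentration.

(* For d >= 1 and beta <= 1/2: 0 < ln(2d/beta) <= 2 ln(d/beta) (as d/beta >= 2). *)
Lemma log_ratio_bounds d beta : (1 <= d)%nat -> 0 < beta <= / 2 ->
  0 < ln (2 * INR d / beta) <= 2 * ln (INR d / beta).
Proof.
  intros Hd Hbeta.
  assert (Hdr : 1 <= INR d) by (apply (le_INR 1); auto).
  assert (Hratio : 2 <= INR d / beta).
  { apply (Rmult_le_reg_r beta); [lra|]. unfold Rdiv.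
    rewrite Rmult_assoc, Rinv_l, Rmult_1_r by lra. nra. }
  assert (Hln2 : 0 < ln 2) by (rewrite <- ln_1; apply ln_increasing; lra).
  assert (Hln : ln 2 <= ln (INR d / beta)).
  { destruct Hratio as [H| <-]; [left; apply ln_increasing; lra | lra]. }
  replace (2 * INR d / beta) with (2 * (INR d / beta)) by (field; lra).
  rewrite ln_mult by lra. lra.
Qed.

Lemma threshold_bound c E D L l n : 0 <= c -> 0 < E -> 0 < n -> 0 <= L <= 2 * l ->
  (c * E) ^ 2 <= 288 * D ->
  3 * c * sqrt (L / n) <= 100 * sqrt (D * l) / (E * sqrt n).
Proof.
  intros Hc HE Hn HL HcE.
  assert (Hsn : 0 < sqrt n) by (apply sqrt_lt_R0; auto).
  assert (HD : 0 <= D) by nra.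
  assert (Hkey : 3 * c * E * sqrt L <= 100 * sqrt (D * l)).
  { apply Rsqr_incr_0_var; [| pose proof (sqrt_pos (D * l)); lra].
    unfold Rsqr.
    replace (3 * c * E * sqrt L * (3 * c * E * sqrt L)) with (9 * (c * E) ^ 2 * (sqrt L * sqrt L)) by ring.
    replace (100 * sqrt (D * l) * (100 * sqrt (D * l)))
      with (10000 * (sqrt (D * l) * sqrt (D * l))) by ring.
    rewrite !sqrt_sqrt by nra. nra. }
  rewrite sqrt_div_alt by auto.
  replace (3 * c * (sqrt L / sqrt n)) with (3 * c * E * sqrt L / (E * sqrt n)) by (field; lra).
  unfold Rdiv. apply Rmult_le_compat_r; [left; apply Rinv_0_lt_compat; nra | auto].
Qed.

Theorem theorem1 :
  exists K : R,
  forall (d N : nat) (eps delta beta : R) (x : nat -> nat -> R),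
    (1 <= d)%nat -> (1 <= N)%nat ->
    0 < eps <= 1 -> 0 <= delta -> Cd d * delta < 1 ->
    0 < beta <= / 2 -> ln (2 * INR d / beta) <= INR N ->
    (forall i j, (i < N)%nat -> (j < d)%nat -> -1 <= x i j <= 1) ->
    prob_mech1 d N eps delta x
      (fun ys => maxdev d N eps delta x ys <=
         K * sqrt (INR d * ln (INR d / beta)) / ((eps + 2 ^ d * delta) * sqrt (INR N)))
    >= 1 - beta.
Proof.
  exists 100. intros d N eps delta beta x Hd HN Heps Hdelta HCd Hbeta HLN Hx.
  set (L := ln (2 * INR d / beta)) in *.
  pose proof (log_ratio_bounds d beta Hd Hbeta) as HL. fold L in HL.
  assert (Hdr : 1 <= INR d) by (apply (le_INR 1); auto).
  assert (HE : 0 < eps + 2 ^ d * delta) by (pose proof (pow_le 2 d); nra).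
  pose proof (B_ge_1 d eps delta Hd (proj1 Heps) Hdelta HCd) as HB.
  assert (Hthr : 3 * (B_ed d eps delta + 1) * sqrt (L / INR N) <=
                 100 * sqrt (INR d * ln (INR d / beta)) / ((eps + 2 ^ d * delta) * sqrt (INR N))).
  { apply threshold_bound; try lra. apply scale_bound; auto. }
  pose proof (concentration d N eps delta x Hd HN (proj1 Heps) Hdelta HCd Hx _ L
                (conj (proj1 HL) HLN) Hthr) as Hconc.
  (* The failure probability 2 d e^(-L) is exactly beta. *)
  replace (2 * INR d * exp (- L)) with beta in Hconc.
  - exact Hconc.
  - unfold L. rewrite exp_Ropp, exp_ln by (apply Rdiv_lt_0_compat; lra). field. lra.
Qed.
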